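(* Let $n\ge2$ and let $\mathbf{r}\in\mathbb{R}^n$ have pairwise distinct coordinates; let $r_{(n)}=\max_ir_i$, $r_{(1)}=\min_ir_i$, and let $i^\star,j^\star$ be the indices with $r_{i^\star}=r_{(n)}$, $r_{j^\star}=r_{(1)}$. Then $$\max_{\boldsymbol{\pi}\in\Delta_n}\gamma(\boldsymbol{\pi},\mathbf{r})=\log\Big(\frac{e^{r_{(n)}}-e^{r_{(1)}}}{r_{(n)}-r_{(1)}}\Big)-\frac{e^{r_{(n)}}r_{(1)}-e^{r_{(1)}}r_{(n)}}{e^{r_{(n)}}-e^{r_{(1)}}}-1,$$ and the maximizer $\boldsymbol{\pi}^\star$ is unique and given by $$\pi^\star_{i^\star}=\frac{e^{r_{i^\star}}-e^{r_{j^\star}}-(r_{i^\star}-r_{j^\star})e^{r_{j^\star}}}{(r_{i^\star}-r_{j^\star})(e^{r_{i^\star}}-e^{r_{j^\star}})},\qquad\pi^\star_{j^\star}=1-\pi^\star_{i^\star},\qquad\pi^\star_k=0\ (k\notin\{i^\star,j^\star\}).$$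
   Context: $\Delta_n=\{\mathbf{x}\in[0,1]^n:\sum_ix_i=1\}$; $\supp(\mathbf{x})=\{i:x_i>0\}$. For $\boldsymbol{\pi}\in\Delta_n$ and $\mathbf{r}\in\mathbb{R}^n$, $\gamma(\boldsymbol{\pi},\mathbf{r})=\log\big(\sum_{i\in\supp(\boldsymbol{\pi})}\pi_ie^{r_i}\big)-\sum_{i\in\supp(\boldsymbol{\pi})}\pi_ir_i$. *)

From HB Require Import structures.
From mathcomp Require Import all_boot all_order all_algebra.
From mathcomp Require Import all_classical all_reals all_analysis.
Set Implicit Arguments. Unset Strict Implicit. Unset Printing Implicit Defensive.
Import Order.TTheory GRing.Theory Num.Theory.
Local Open Scope ring_scope.

Definition simplex (R : realType) (n : nat) (x : 'I_n -> R) : Prop :=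
  (forall i, 0 <= x i <= 1) /\ \sum_(i < n) x i = 1.

Definition gamma (R : realType) (n : nat) (p r : 'I_n -> R) : R :=
  ln (\sum_(i < n | 0 < p i) p i * expR (r i)) - \sum_(i < n | 0 < p i) p i * r i.

From HB Require Import structures.
From mathcomp Require Import all_boot all_order all_algebra.
From mathcomp Require Import all_classical all_reals all_analysis.
From mathcomp Require Import ring lra.
Set Implicit Arguments. Unset Strict Implicit. Unset Printing Implicit Defensive.
Import Order.TTheory GRing.Theory Num.Theory.
Local Open Scope ring_scope.

(** By convexity, each [e^{r_i}] lies below the chord of [exp] over [[m, M]],
    [m = min r], [M = max r]; averaging, [E = sum_i p_i e^{r_i}] is at most
    [e^m + (L - m) B], where [L = sum_i p_i r_i] and [B] is the slope of that
    chord.  Combined with [ln E <= ln B + E/B - 1] this bounds [gamma] by a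
    constant, and the two slacks add up exactly:
    [gamma_max - gamma = (E/B - 1 - ln (E/B)) + (average chord gap)/((M - m) B)].
    Equality forces [E = B] and no mass strictly inside [(m, M)], which pins
    down the two-point maximizer. *)

Section ExpChord.
Variable R : realType.

Lemma ln_le_subr1 (y : R) : 0 < y -> ln y <= y - 1.
Proof. by move=> y0; have := expR_ge1Dx (ln y); rewrite lnK ?posrE //; lra. Qed.

Lemma ln_lt_subr1 (y : R) : 0 < y -> y != 1 -> ln y < y - 1.
Proof.
move=> y0 y1; have lny0 : ln y != 0 by rewrite ln_eq0.
by have := expR_gt1Dx lny0; rewrite lnK ?posrE //; lra.
Qed.

Definition chord_gap (m M x : R) : R :=
  (M - x) * expR m + (x - m) * expR M - (M - m) * expR x.

Lemma chord_gapE (m M x : R) : chord_gap m M x =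
  expR x * ((M - x) * (expR (m - x) - (1 + (m - x)))
          + (x - m) * (expR (M - x) - (1 + (M - x)))).
Proof.
have em : expR m = expR x * expR (m - x) by rewrite -expRD subrKC.
have eM : expR M = expR x * expR (M - x) by rewrite -expRD subrKC.
by rewrite /chord_gap em eM; ring.
Qed.

Lemma chord_gap_ge0 (m M x : R) : m <= x <= M -> 0 <= chord_gap m M x.
Proof.
case/andP=> mx xM; rewrite chord_gapE.
apply/mulr_ge0/addr_ge0; rewrite ?expR_ge0 //; apply: mulr_ge0;
  by rewrite ?subr_ge0 ?expR_ge1Dx.
Qed.

Lemma chord_gap_gt0 (m M x : R) : m < x < M -> 0 < chord_gap m M x.
Proof.
case/andP=> mx xM; rewrite chord_gapE.
apply/mulr_gt0/ltr_wpDr; rewrite ?expR_gt0 //.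
- by apply: mulr_ge0; rewrite ?subr_ge0 ?expR_ge1Dx ?ltW.
- by apply: mulr_gt0; rewrite subr_gt0 // expR_gt1Dx // subr_eq0 lt_eqF.
Qed.

Lemma chord_gap_left (m M : R) : chord_gap m M m = 0.
Proof. by rewrite /chord_gap; ring. Qed.

Lemma chord_gap_right (m M : R) : chord_gap m M M = 0.
Proof. by rewrite /chord_gap; ring. Qed.

Definition exp_slope (m M : R) : R := (expR M - expR m) / (M - m).

Definition gamma_max (m M : R) : R :=
  ln (exp_slope m M) + expR m / exp_slope m M - m - 1.

Lemma expR_le_exp_slope (m M : R) : m < M -> expR m <= exp_slope m M.
Proof.
move=> mM; rewrite /exp_slope ler_pdivlMr ?subr_gt0 //.
have eM : expR M = expR m * expR (M - m) by rewrite -expRD subrKC.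
by have := expR_ge1Dx (M - m); have := expR_gt0 m; rewrite eM; nra.
Qed.

Lemma exp_slope_le_expR (m M : R) : m < M -> exp_slope m M <= expR M.
Proof.
move=> mM; rewrite /exp_slope ler_pdivrMr ?subr_gt0 //.
have em : expR m = expR M * expR (m - M) by rewrite -expRD subrKC.
by have := expR_ge1Dx (m - M); have := expR_gt0 M; rewrite em; nra.
Qed.

Lemma exp_slope_gt0 (m M : R) : m < M -> 0 < exp_slope m M.
Proof. by move=> mM; apply: lt_le_trans (expR_le_exp_slope mM); apply: expR_gt0. Qed.

Definition chord_weight (m M : R) : R :=
  (exp_slope m M - expR m) / (expR M - expR m).

Lemma chord_weight_in01 (m M : R) : m < M -> 0 <= chord_weight m M <= 1.
Proof.
move=> mM; have eM0 : 0 < expR M - expR m by rewrite subr_gt0 ltr_expR.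
rewrite /chord_weight; apply/andP; split.
- by apply: divr_ge0; [rewrite subr_ge0 expR_le_exp_slope | exact: ltW].
- by rewrite ler_pdivrMr // mul1r lerD2r exp_slope_le_expR.
Qed.

Lemma chord_weight_mean (m M : R) : m < M ->
  chord_weight m M * expR M + (1 - chord_weight m M) * expR m = exp_slope m M.
Proof.
move=> mM; have eM : expR M - expR m != 0 by rewrite subr_eq0 gt_eqF ?ltr_expR.
by rewrite /chord_weight; field.
Qed.

End ExpChord.

Section WeightedChord.
Variables (R : realType) (I : finType) (p r : I -> R) (m M : R).
Hypotheses (mM : m < M) (p_ge0 : forall i, 0 <= p i) (p_sum1 : \sum_i p i = 1).
Hypothesis r_in : forall i, m <= r i <= M.

Let E := \sum_i p i * expR (r i).
Let L := \sum_i p i * r i.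
Let B := exp_slope m M.

Lemma sum_chord_gap :
  \sum_i p i * chord_gap m M (r i) = (M - L) * expR m + (L - m) * expR M - (M - m) * E.
Proof.
rewrite (eq_bigr (fun i => (M * expR m - m * expR M) * p i
    + (expR M - expR m) * (p i * r i) - (M - m) * (p i * expR (r i)))); last first.
  by move=> i _; rewrite /chord_gap; ring.
by rewrite sumrB big_split /= -!mulr_sumr p_sum1 -/E -/L; ring.
Qed.

Lemma mean_expR_gt0 : 0 < E.
Proof.
apply: (lt_le_trans (expR_gt0 m)).
rewrite -[expR m]mul1r -p_sum1 mulr_suml /E.
apply: ler_sum => i _; apply: ler_wpM2l => //.
by rewrite ler_expR; case/andP: (r_in i).
Qed.

Lemma gamma_max_subE : gamma_max m M - (ln E - L) =
  (E / B - 1 - ln (E / B)) + (\sum_i p i * chord_gap m M (r i)) / ((M - m) * B).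
Proof.
have B0 : 0 < B := exp_slope_gt0 mM.
have E0 := mean_expR_gt0.
rewrite ln_div ?posrE // sum_chord_gap /gamma_max -/B.
have dM : M - m != 0 by rewrite subr_eq0 gt_eqF.
have eM : expR M - expR m != 0 by rewrite subr_eq0 gt_eqF // ltr_expR.
by rewrite /B /exp_slope; field; rewrite dM eM.
Qed.

Lemma mean_log_exp_le : ln E - L <= gamma_max m M.
Proof.
have B0 : 0 < B := exp_slope_gt0 mM.
rewrite -subr_ge0 gamma_max_subE; apply: addr_ge0.
- by rewrite subr_ge0 ln_le_subr1 // divr_gt0 // mean_expR_gt0.
- apply: divr_ge0; last by rewrite mulr_ge0 ?subr_ge0 ?ltW.
  by apply: sumr_ge0 => i _; rewrite mulr_ge0 ?chord_gap_ge0.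
Qed.

Lemma mean_log_exp_eq :
  ln E - L = gamma_max m M <->
  E = B /\ forall i, p i * chord_gap m M (r i) = 0.
Proof.
have B0 : 0 < B := exp_slope_gt0 mM.
have EB0 : 0 < E / B by rewrite divr_gt0 // mean_expR_gt0.
have lnslack_ge0 : 0 <= E / B - 1 - ln (E / B) by rewrite subr_ge0 ln_le_subr1.
have gaps_ge0 : forall i, 0 <= p i * chord_gap m M (r i).
  by move=> i; rewrite mulr_ge0 ?chord_gap_ge0.
have dB0 : 0 < (M - m) * B by rewrite mulr_gt0 ?subr_gt0.
have gE := gamma_max_subE.
set S := \sum_i _ in gE.
have S_ge0 : 0 <= S by apply: sumr_ge0 => i _.
have SdB_ge0 : 0 <= S / ((M - m) * B) by rewrite divr_ge0 // ltW.
split=> [eqV | [EB gaps0]].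
- have S0 : S = 0.
    have : S / ((M - m) * B) = 0 by lra.
    by move/eqP; rewrite mulf_eq0 invr_eq0 (gt_eqF dB0) orbF => /eqP.
  split; last by move=> i; apply: (psumr_eq0P (fun i _ => gaps_ge0 i) S0).
  have EB1 : E / B = 1.
    apply/eqP/negPn/negP => /(ln_lt_subr1 EB0) lt_ln.
    by move: gE; rewrite S0 mul0r; lra.
  by apply: (divIr (unitf_gt0 B0)); rewrite EB1 divff ?gt_eqF.
- have S0 : S = 0 by rewrite /S big1.
  by move: gE; rewrite S0 EB divff ?gt_eqF // ln1 mul0r; lra.
Qed.

End WeightedChord.

Lemma big_support_mul (R : realType) (I : finType) (p f : I -> R) :
  (forall i, 0 <= p i) -> \sum_(i | 0 < p i) p i * f i = \sum_i p i * f i.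
Proof.
move=> p_ge0; rewrite [RHS](bigID (fun i => 0 < p i)) /= [X in _ = _ + X]big1 ?addr0 //.
move=> i; rewrite -leNgt => pi_le0.
by rewrite (@le_anti _ _ (p i) 0) ?pi_le0 ?p_ge0 ?mul0r.
Qed.

Lemma big_two_point (R : realType) (I : finType) (q f : I -> R) (i j : I) :
  i != j -> (forall k, k != i -> k != j -> q k = 0) ->
  \sum_k q k * f k = q i * f i + q j * f j.
Proof.
move=> ij q0; rewrite (bigD1 i) //= (bigD1 j) 1?eq_sym //=.
by rewrite big1 ?addr0 ?addrA // => k /andP [kj ki]; rewrite q0 // mul0r.
Qed.

Lemma argmin_lt_argmax (R : realType) (n : nat) (r : 'I_n -> R) (i j : 'I_n) :
  (1 < n)%N -> injective r ->
  (forall k, r k <= r i) -> (forall k, r j <= r k) -> r j < r i.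
Proof.
move=> n_gt1 r_inj r_le r_ge; rewrite lt_neqAle r_le andbT.
apply/eqP => rji; have const k : k = i.
  by apply: r_inj; apply/le_anti; rewrite r_le -rji r_ge.
have := const (Ordinal (ltnW n_gt1)); move: (const (Ordinal n_gt1)) => <-.
by move/(congr1 val).
Qed.

Lemma gamma_simplex (R : realType) (n : nat) (p r : 'I_n -> R) : simplex p ->
  gamma p r = ln (\sum_i p i * expR (r i)) - \sum_i p i * r i.
Proof.
case=> p01 _; have p_ge0 i : 0 <= p i by case/andP: (p01 i).
by rewrite /gamma !big_support_mul.
Qed.

Definition two_point (R : realType) (n : nat) (i j : 'I_n) (a : R) : 'I_n -> R :=
  fun k => if k == i then a else if k == j then 1 - a else 0.

Lemma two_point_out (R : realType) (n : nat) (i j k : 'I_n) (a : R) :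
  k != i -> k != j -> two_point i j a k = 0.
Proof. by move=> ki kj; rewrite /two_point (negbTE ki) (negbTE kj). Qed.

Lemma two_point_simplex (R : realType) (n : nat) (i j : 'I_n) (a : R) :
  i != j -> 0 <= a <= 1 -> simplex (two_point i j a).
Proof.
move=> ij /andP [a_ge0 a_le1]; split.
- move=> k; rewrite /two_point; case: ifP => _; first by rewrite a_ge0.
  by case: ifP => _; apply/andP; split; lra.
- under eq_bigr do rewrite -[two_point _ _ _ _]mulr1.
  rewrite (big_two_point _ ij (fun k => two_point_out a)) /two_point eqxx.
  by rewrite eq_sym (negbTE ij) eqxx; lra.
Qed.

Lemma eq_two_point (R : realType) (n : nat) (p : 'I_n -> R) (i j : 'I_n) :
  simplex p -> i != j -> (forall k, k != i -> k != j -> p k = 0) ->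
  p = two_point i j (p i).
Proof.
move=> [_ p_sum1] ij p_out; apply/funext => k; rewrite /two_point.
case: eqVneq => [-> // | ki]; case: eqVneq => [-> | kj]; last exact: p_out.
move: p_sum1; under eq_bigr do rewrite -[p _]mulr1.
by rewrite (big_two_point _ ij p_out); lra.
Qed.

Section MaximizerOnSimplex.
Variables (R : realType) (n : nat) (r : 'I_n -> R) (i j : 'I_n).
Hypotheses (r_le : forall k, r k <= r i) (r_ge : forall k, r j <= r k).
Hypothesis mM : r j < r i.

Let r_in k : r j <= r k <= r i. Proof. by rewrite r_ge r_le. Qed.
Let ij : i != j. Proof. by apply: contraTneq mM => ->; rewrite ltxx. Qed.
Let pstar := two_point i j (chord_weight (r j) (r i)).

Lemma gamma_le_max (p : 'I_n -> R) : simplex p -> gamma p r <= gamma_max (r j) (r i).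
Proof.
case=> p01 p_sum1; rewrite gamma_simplex //.
by apply: mean_log_exp_le => // k; case/andP: (p01 k).
Qed.

Lemma gamma_eq_maxP (p : 'I_n -> R) : simplex p ->
  gamma p r = gamma_max (r j) (r i) <->
  \sum_k p k * expR (r k) = exp_slope (r j) (r i)
  /\ forall k, p k * chord_gap (r j) (r i) (r k) = 0.
Proof.
case=> p01 p_sum1; rewrite gamma_simplex //.
by apply: mean_log_exp_eq => // k; case/andP: (p01 k).
Qed.

Lemma simplex_chord_weight : simplex pstar.
Proof. exact/two_point_simplex/chord_weight_in01. Qed.

Lemma gamma_chord_weight : gamma pstar r = gamma_max (r j) (r i).
Proof.
apply/(gamma_eq_maxP simplex_chord_weight); split=> [|k].
  rewrite (big_two_point _ ij (fun k => two_point_out _)) /pstar /two_point eqxx.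
  by rewrite eq_sym (negbTE ij) eqxx chord_weight_mean.
rewrite /pstar /two_point; case: eqVneq => [->|_]; first by rewrite chord_gap_right mulr0.
by case: eqVneq => [->|_]; rewrite ?chord_gap_left ?mulr0 ?mul0r.
Qed.

Lemma gamma_eq_max_chord_weight (p : 'I_n -> R) : injective r -> simplex p ->
  gamma p r = gamma_max (r j) (r i) -> p = pstar.
Proof.
move=> r_inj sp /(gamma_eq_maxP sp) [pE gaps0].
have p_out k : k != i -> k != j -> p k = 0.
  move=> ki kj; apply/eqP; move/eqP: (gaps0 k); rewrite mulf_eq0 => /orP [//|].
  rewrite gt_eqF // chord_gap_gt0 // !lt_neqAle r_ge r_le !andbT.
  by apply/andP; split; apply/eqP => /r_inj e; [move: kj | move: ki]; rewrite e eqxx.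
rewrite (eq_two_point sp ij p_out) /pstar; congr two_point.
have eM : expR (r i) - expR (r j) != 0 by rewrite subr_eq0 gt_eqF ?ltr_expR.
case: sp => _; under eq_bigr do rewrite -[p _]mulr1.
rewrite (big_two_point _ ij p_out) !mulr1 => p_sum1.
move: pE; rewrite (big_two_point _ ij p_out) -(chord_weight_mean mM) => pE.
by apply: (mulIf eM); nra.
Qed.

End MaximizerOnSimplex.

Theorem mainTheorem16 (R : realType) (n : nat) (r : 'I_n -> R)
  (istar jstar : 'I_n) :
  (2 <= n)%N ->
  injective r ->
  (forall k, r k <= r istar) ->
  (forall k, r jstar <= r k) ->
  let V := ln ((expR (r istar) - expR (r jstar)) / (r istar - r jstar))
           - (expR (r istar) * r jstar - expR (r jstar) * r istar)
             / (expR (r istar) - expR (r jstar)) - 1 in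
  let a := (expR (r istar) - expR (r jstar) - (r istar - r jstar) * expR (r jstar))
           / ((r istar - r jstar) * (expR (r istar) - expR (r jstar))) in
  let pistar : 'I_n -> R :=
    fun k => if k == istar then a else if k == jstar then 1 - a else 0 in
  [/\ simplex pistar,
      gamma pistar r = V,
      (forall p, simplex p -> gamma p r <= V) &
      (forall p, simplex p -> gamma p r = V -> p = pistar)].
Proof.
move=> n_ge2 r_inj r_le r_ge V a pistar.
have mM := argmin_lt_argmax n_ge2 r_inj r_le r_ge.
have dM : r istar - r jstar != 0 by rewrite subr_eq0 gt_eqF.
have eM : expR (r istar) - expR (r jstar) != 0 by rewrite subr_eq0 gt_eqF ?ltr_expR.
have VE : V = gamma_max (r jstar) (r istar).
  rewrite /V /gamma_max /exp_slope.
  by rewrite -!addrA; congr (_ + _); field; rewrite dM eM.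
have aE : a = chord_weight (r jstar) (r istar).
  by rewrite /a /chord_weight /exp_slope; field; rewrite dM eM.
change pistar with (two_point istar jstar a); rewrite VE aE.
split=> [|||p].
- exact: simplex_chord_weight.
- exact: gamma_chord_weight.
- exact: gamma_le_max.
- exact: gamma_eq_max_chord_weight.
Qed.
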